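(* No finite cyclic group has an $n$-power-free decomposition, for any integer $n\geqslant1$.
   Context: The power graph $\mathcal{P}(G)$ of a finite group $G$ has vertex set $G$, two distinct elements being adjacent when one is a power of the other. An $n$-power-free decomposition of $G$ ($n\geqslant1$) is a partition $G=C\uplus B_1\uplus\cdots\uplus B_n$ of $G$ into a cyclic $p$-subgroup $C$ of maximal order (for some prime $p$) and $n$ nonempty subsets $B_1,\ldots,B_n$ such that each $B_i$ is an independent set (pairwise nonadjacent vertices) of $\mathcal{P}(G)$ and $|B_i|>1$ for each $i$. *)

From mathcomp Require Import all_boot all_fingroup all_solvable.
Set Implicit Arguments. Unset Strict Implicit. Unset Printing Implicit Defensive.
Local Open Scope group_scope.

Section PowerGraph.
Variable gT : finGroupType.

Definition is_power (x y : gT) : Prop := exists k : nat, x = y ^+ k.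

Definition pg_adj (x y : gT) : Prop := x <> y /\ (is_power x y \/ is_power y x).

Definition pg_independent (B : {set gT}) : Prop :=
  forall x y, x \in B -> y \in B -> ~ pg_adj x y.

Definition max_cyclic_psubgroup (p : nat) (G C : {group gT}) : Prop :=
  [/\ prime p, C \subset G, cyclic C, p.-group C &
      forall D : {group gT}, D \subset G -> cyclic D -> p.-group D -> #|D| <= #|C|].

Definition power_free_decomposition (n : nat) (G C : {group gT})
    (B : 'I_n -> {set gT}) : Prop :=
  [/\ exists p, max_cyclic_psubgroup p G C,
      C :|: \bigcup_(i < n) B i = G,
      forall i, [disjoint C & B i],
      forall i j, i != j -> [disjoint B i & B j] &
      forall i, 1 < #|B i| /\ pg_independent (B i)].

Definition has_power_free_decomposition (n : nat) (G : {group gT}) : Prop :=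
  exists (C : {group gT}) (B : 'I_n -> {set gT}), power_free_decomposition G C B.

End PowerGraph.

From mathcomp Require Import all_boot all_fingroup all_solvable.

(* If G = <[g]>, the decomposition has at least one nonempty part B_i, so C is a
   proper subgroup of G and cannot contain the generator g; hence g lies in some
   B_i.  Every other element of B_i is a power of g, hence adjacent to g, so B_i
   is the singleton {g}, contradicting |B_i| > 1. *)

Set Implicit Arguments.
Unset Strict Implicit.
Unset Printing Implicit Defensive.

Local Open Scope group_scope.

Section CyclicPowerGraph.

Variable gT : finGroupType.

Lemma pg_adj_cycle (g y : gT) : y \in <[g]> -> y != g -> pg_adj y g.
Proof. by move=> /cycleP[k ->] neq_yg; split; [apply/eqP | left; exists k]. Qed.

Lemma pg_independent_cycle_sub1 (g : gT) (B : {set gT}) :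
  g \in B -> B \subset <[g]> -> pg_independent B -> B \subset [set g].
Proof.
move=> gB sBg indepB; apply/subsetP=> y yB; rewrite inE.
apply: contraT => neq_yg; case: (indepB y g yB gB).
exact: pg_adj_cycle (subsetP sBg y yB) neq_yg.
Qed.

Lemma pg_independent_cycle_card (g : gT) (B : {set gT}) :
  g \in B -> B \subset <[g]> -> pg_independent B -> #|B| <= 1.
Proof.
by move=> gB sBg indepB; rewrite -(cards1 g) subset_leq_card //;
  apply: pg_independent_cycle_sub1.
Qed.

End CyclicPowerGraph.

Section PowerFreeDecomposition.

Variables (gT : finGroupType) (n : nat) (G C : {group gT}) (B : 'I_n -> {set gT}).
Hypothesis decG : power_free_decomposition G C B.

Lemma pfd_part_sub i : B i \subset G.
Proof.
have [_ defG _ _ _] := decG; rewrite -defG.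
exact: subset_trans (bigcup_sup i isT) (subsetUr _ _).
Qed.

Lemma pfd_part_card i : 1 < #|B i|.
Proof. by have [_ _ _ _ /(_ i)[]] := decG. Qed.

Lemma pfd_part_independent i : pg_independent (B i).
Proof. by have [_ _ _ _ /(_ i)[]] := decG. Qed.

Lemma pfd_proper : 0 < n -> C \proper G.
Proof.
move=> n_gt0; have [_ defG disjCB _ _] := decG; pose i : 'I_n := Ordinal n_gt0.
have [y yBi] : exists y, y \in B i by apply/card_gt0P/ltnW/pfd_part_card.
rewrite properE -{1}defG subsetUl; apply/subsetPn; exists y.
  exact: subsetP (pfd_part_sub i) y yBi.
by rewrite (disjointFl (disjCB i) yBi).
Qed.

Lemma pfd_cover x : x \in G -> x \notin C -> exists i, x \in B i.
Proof.
have [_ defG _ _ _] := decG; rewrite -{1}defG inE => /orP[-> // | ].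
by case/bigcupP=> i _ xBi; exists i.
Qed.

End PowerFreeDecomposition.

Theorem proposition3p5 (gT : finGroupType) (G : {group gT}) (n : nat) :
  1 <= n -> cyclic G -> ~ has_power_free_decomposition n G.
Proof.
move=> n_gt0 /cyclicP[g defG] [C [B decG]].
have gG : g \in G by rewrite defG cycle_id.
have gNC : g \notin C.
  by move: (pfd_proper decG n_gt0); rewrite properE defG cycle_subG => /andP[].
have [i gBi] := pfd_cover decG gG gNC.
have sBG : B i \subset <[g]> by rewrite -defG (pfd_part_sub decG).
have := pg_independent_cycle_card gBi sBG (pfd_part_independent (i := i) decG).
by rewrite leqNgt (pfd_part_card decG).
Qed.
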